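(* Let $f\in C_{\mathbb{R}}[0,1]$, $u\in(0,1]$ and $\rho>0$. If $f(u)\neq0$, then there exist a constant $d>0$ and a sequence $\{\rho_k\}_{k\ge1}$ with $\rho_k\to+\infty$ such that $|\Phi_{f,u}(\rho_k)|>\rho e^{d\rho_k}$ for all $k\ge1$.
   Context: $C_{\mathbb{R}}[0,1]$ denotes the real-valued continuous functions on $[0,1]$. For $f\in C[0,1]$ and $u\in(0,1]$, $\Phi_{f,u}(z)=\int_0^u f(s)e^{(u-s)z}\,ds$ ($z\in\mathbb{C}$). *)

From Stdlib Require Import Reals.
From Coquelicot Require Import Coquelicot.
Open Scope R_scope.

Definition continuous_on_01 (f : R -> R) : Prop :=
  forall x, 0 <= x <= 1 ->
    filterlim f (within (fun y => 0 <= y <= 1) (locally x)) (locally (f x)).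

(* Phi_{f,u}(z) = \int_0^u f(s) e^{(u-s) z} ds, evaluated at a real point z
   (for real z and real f this is a real number). *)
Definition Phi (f : R -> R) (u z : R) : R :=
  RInt (fun s => f s * exp ((u - s) * z)) 0 u.

(* Write g for f multiplied by f(u), so that g >= c > 0 on some [u - δ, u].
   If |Phi_{g,u}(z)| <= rho e^{δ z / 8} for all large z, test g against the
   Gompertz window W = G_{u-δ/2} - G_{u-δ/4}, where G_b(s) = exp(-e^{x(b-s)})
   is a smoothed unit step at s = b.  For large x the window is close to the
   indicator of [u - δ/2, u - δ/4], so \int_0^u g W is bounded below by a
   positive constant.  Expanding exp(-y) in its Taylor series turns
   \int_0^u g G_b into \sum_m (-1)^m/m! e^{m x (b-u)} Phi_{g,u}(m x), and the
   growth bound makes the resulting geometric series O(1/x).  Hence the growth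
   bound fails on every half-line [z0, +oo), which produces the sequence. *)

From Stdlib Require Import Reals Lra Lia Factorial Classical IndefiniteDescription.
From Coquelicot Require Import Coquelicot.
Open Scope R_scope.

Lemma ex_RInt_continuous_everywhere (g : R -> R) a b :
  (forall s, continuous g s) -> ex_RInt g a b.
Proof. intros Hg. apply (ex_RInt_continuous (V := R_CompleteNormedModule)); auto. Qed.

Lemma ex_RInt_sum_f_R0 (g : nat -> R -> R) (a b : R) (N : nat) :
  (forall m, ex_RInt (g m) a b) -> ex_RInt (fun s => sum_f_R0 (fun m => g m s) N) a b.
Proof.
  intros Hg. induction N as [| N IH]; [apply Hg |].
  apply (ex_RInt_plus (V := R_NormedModule) _ _ _ _ IH (Hg (S N))).
Qed.

Lemma RInt_sum_f_R0 (g : nat -> R -> R) (a b : R) (N : nat) :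
  (forall m, ex_RInt (g m) a b) ->
  RInt (fun s => sum_f_R0 (fun m => g m s) N) a b = sum_f_R0 (fun m => RInt (g m) a b) N.
Proof.
  intros Hg. induction N as [| N IH]; [reflexivity |].
  simpl. rewrite <- IH.
  apply (RInt_plus (V := R_CompleteNormedModule)); [apply ex_RInt_sum_f_R0, Hg | apply Hg].
Qed.

Lemma RInt_subinterval_le (g : R -> R) (a p q b : R) :
  a <= p -> p <= q -> q <= b -> (forall s, continuous g s) ->
  (forall s, a <= s <= b -> 0 <= g s) -> RInt g p q <= RInt g a b.
Proof.
  intros Hap Hpq Hqb Hg Hpos.
  assert (Hex : forall c e, ex_RInt g c e) by (intros; apply ex_RInt_continuous_everywhere, Hg).
  rewrite <- (RInt_Chasles g a p b), <- (RInt_Chasles g p q b) by auto.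
  repeat change (plus ?r ?t) with (r + t).
  assert (0 <= RInt g a p) by (apply RInt_ge_0; auto; intros; apply Hpos; lra).
  assert (0 <= RInt g q b) by (apply RInt_ge_0; auto; intros; apply Hpos; lra).
  lra.
Qed.

Lemma continuous_bounded_on (g : R -> R) a b : a <= b ->
  (forall s, continuous g s) -> exists M, forall s, a <= s <= b -> Rabs (g s) <= M.
Proof.
  intros Hab Hg.
  destruct (continuity_ab_maj (fun s => Rabs (g s)) a b Hab) as [m [Hm _]].
  - intros s _. apply continuity_pt_filterlim, continuous_Rabs_comp, Hg.
  - exists (Rabs (g m)). exact Hm.
Qed.

Lemma continuous_ge_half_left (g : R -> R) (u : R) : 0 < u -> 0 < g u ->
  continuous g u -> exists δ, 0 < δ <= u /\ forall s, u - δ <= s <= u -> g u / 2 <= g s.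
Proof.
  intros Hu Hgu Hg.
  assert (Hc : 0 < g u / 2) by lra.
  destruct (proj1 (filterlim_locally g (g u)) Hg (mkposreal _ Hc)) as [[δ0 Hδ0] Hball].
  exists (Rmin (δ0 / 2) u). split.
  - split; [apply Rmin_glb_lt; simpl in *; lra | apply Rmin_r].
  - intros s Hs. pose proof (Rmin_l (δ0 / 2) u).
    assert (Hsu : ball u δ0 s).
    { change (Rabs (s - u) < δ0). rewrite Rabs_left1; simpl in *; lra. }
    specialize (Hball s Hsu). change (Rabs (g s - g u) < g u / 2) in Hball.
    apply Rabs_def2 in Hball. lra.
Qed.

Lemma seq_to_infinity_of_unbounded (P : R -> Prop) :
  (forall z0, exists z, z0 <= z /\ P z) ->
  exists r : nat -> R, is_lim_seq r p_infty /\ forall k, P (r k).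
Proof.
  intros HP.
  destruct (functional_choice (fun (n : nat) z => INR n <= z /\ P z) (fun n => HP (INR n)))
    as [r Hr].
  exists r. split.
  - apply (is_lim_seq_le_p_loc INR); [exists 0%nat; intros n _; apply Hr | apply is_lim_seq_INR].
  - intros k. apply Hr.
Qed.

Lemma Rabs_sum_f_R0_le_geom (T : nat -> R) (r w : R) :
  0 <= w < 1 -> 0 <= r -> T 0%nat = 0 ->
  (forall m, (1 <= m)%nat -> Rabs (T m) <= r * w ^ m) ->
  forall N, Rabs (sum_f_R0 T N) <= r * w / (1 - w).
Proof.
  intros Hw Hr H0 Hm N.
  assert (Hpartial : Rabs (sum_f_R0 T N) <= r * w * (1 - w ^ N) / (1 - w)).
  { induction N as [| N IH].
    - simpl. rewrite H0, Rabs_R0. unfold Rdiv. rewrite Rminus_diag, !Rmult_0_r, Rmult_0_l. lra.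
    - simpl sum_f_R0. eapply Rle_trans; [apply Rabs_triang |].
      eapply Rle_trans; [apply Rplus_le_compat; [exact IH | apply Hm; lia] |].
      right. simpl. field. lra. }
  eapply Rle_trans; [exact Hpartial |].
  apply Rmult_le_compat_r; [left; apply Rinv_0_lt_compat; lra |].
  assert (0 <= w ^ N) by (apply pow_le; lra).
  assert (0 <= r * w) by (apply Rmult_le_pos; lra). nra.
Qed.

Lemma exp_neg_le_inv (y : R) : 0 <= y -> exp (- y) <= / (1 + y).
Proof. intros Hy. rewrite exp_Ropp. apply Rinv_le_contravar; [lra | apply exp_ineq1_le]. Qed.

Lemma exp_pow_INR (t : R) (m : nat) : exp t ^ m = exp (INR m * t).
Proof.
  induction m as [| m IH]; [simpl; rewrite Rmult_0_l, exp_0; reflexivity |].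
  rewrite S_INR. simpl. rewrite IH, <- exp_plus. f_equal. ring.
Qed.

Definition exp_taylor (N : nat) (t : R) : R := sum_f_R0 (fun m => t ^ m / INR (fact m)) N.

Lemma is_derive_n_exp_opp (n : nat) (t : R) :
  is_derive_n (fun t => exp (- t)) n t ((-1) ^ n * exp (- t)).
Proof.
  apply is_derive_n_comp_opp; [| apply is_derive_n_exp].
  apply filter_forall. intros y [|k] _; [exact I |].
  apply ex_derive_ext with exp; [intros; symmetry; apply is_derive_n_unique, is_derive_n_exp |].
  auto_derive; auto.
Qed.

Lemma exp_taylor_error_neg (N : nat) (y : R) : 0 < y ->
  Rabs (exp (- y) - exp_taylor N (- y)) <= y ^ S N / INR (fact (S N)).
Proof.
  intros Hy.
  assert (Hd : forall m t, Derive_n (fun t => exp (- t)) m t = (-1) ^ m * exp (- t))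
    by (intros; apply is_derive_n_unique, is_derive_n_exp_opp).
  destruct (Taylor_Lagrange (fun t => exp (- t)) N 0 y Hy) as [z [Hz ->]].
  { intros t _ [|k] _; [exact I |].
    apply ex_derive_ext with (fun t => (-1) ^ k * exp (- t)); [intros; symmetry; apply Hd |].
    auto_derive; auto. }
  assert (Hsum : sum_f_R0 (fun m => (y - 0) ^ m / INR (fact m)
                                    * Derive_n (fun t => exp (- t)) m 0) N
                 = exp_taylor N (- y)).
  { apply sum_eq. intros m _.
    rewrite Hd, Ropp_0, exp_0, Rminus_0_r.
    replace (- y) with (-1 * y) by ring. rewrite Rpow_mult_distr. field.
    apply INR_fact_neq_0. }
  rewrite Hsum, Hd, Rminus_0_r.
  replace (_ + _ - _) with (y ^ S N / INR (fact (S N)) * ((-1) ^ S N * exp (- z))) by ring.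
  assert (Hpos : 0 <= y ^ S N / INR (fact (S N)))
    by (apply Rdiv_le_0_compat; [apply pow_le; lra | apply INR_fact_lt_0]).
  assert (Hexp : exp (- z) <= 1) by (rewrite <- exp_0; left; apply exp_increasing; lra).
  rewrite Rabs_mult, Rabs_mult, pow_1_abs, (Rabs_pos_eq _ Hpos), Rabs_pos_eq
    by (left; apply exp_pos).
  nra.
Qed.

Definition clamp01 (s : R) : R := Rmax 0 (Rmin 1 s).

Lemma clamp01_in s : 0 <= clamp01 s <= 1.
Proof. unfold clamp01, Rmax, Rmin. repeat destruct Rle_dec; lra. Qed.

Lemma clamp01_id s : 0 <= s <= 1 -> clamp01 s = s.
Proof. intros. unfold clamp01, Rmax, Rmin. repeat destruct Rle_dec; lra. Qed.

Lemma clamp01_lipschitz s t : Rabs (clamp01 t - clamp01 s) <= Rabs (t - s).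
Proof.
  unfold clamp01, Rmax, Rmin, Rabs.
  repeat destruct Rle_dec; repeat destruct Rcase_abs; lra.
Qed.

Lemma continuous_on_01_clamp01 (f : R -> R) :
  continuous_on_01 f -> forall s, continuous (fun t => f (clamp01 t)) s.
Proof.
  intros Hf s.
  apply filterlim_comp
    with (G := within (fun y => 0 <= y <= 1) (locally (clamp01 s))).
  2: apply Hf, clamp01_in.
  intros P [eps Heps]. exists eps. intros t Ht.
  apply Heps; [| apply clamp01_in].
  eapply Rle_lt_trans; [apply clamp01_lipschitz | exact Ht].
Qed.

Lemma continuous_Phi_integrand (f : R -> R) (u z : R) :
  (forall s, continuous f s) -> forall s, continuous (fun t => f t * exp ((u - t) * z)) s.
Proof.
  intros Hf s. apply (continuous_mult f (fun t => exp ((u - t) * z))); [apply Hf |].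
  apply continuous_exp_comp, (ex_derive_continuous (V := R_NormedModule)).
  auto_derive; auto.
Qed.

Lemma Phi_ext (f g : R -> R) (u z : R) : 0 <= u ->
  (forall s, 0 <= s <= u -> f s = g s) -> Phi f u z = Phi g u z.
Proof.
  intros Hu Hfg. apply RInt_ext. intros s Hs.
  rewrite Rmin_left, Rmax_right in Hs by lra. rewrite Hfg by lra. reflexivity.
Qed.

Lemma Phi_scal (f : R -> R) (k u z : R) : (forall s, continuous f s) ->
  Phi (fun s => k * f s) u z = k * Phi f u z.
Proof.
  intros Hf. unfold Phi.
  change (k * RInt ?g 0 u) with (scal k (RInt g 0 u)).
  rewrite <- (RInt_scal (V := R_CompleteNormedModule)).
  - apply RInt_ext. intros s _. apply Rmult_assoc.
  - apply ex_RInt_continuous_everywhere, continuous_Phi_integrand, Hf.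
Qed.

Definition gompertz (x b s : R) : R := exp (- exp (x * (b - s))).

Definition gompertz_window (x b1 b2 s : R) : R := gompertz x b1 s - gompertz x b2 s.

Definition gompertz_taylor (N : nat) (x b s : R) : R := exp_taylor N (- exp (x * (b - s))).

Lemma continuous_gompertz_window (x b1 b2 s : R) : continuous (gompertz_window x b1 b2) s.
Proof.
  apply (ex_derive_continuous (V := R_NormedModule)).
  unfold gompertz_window, gompertz. auto_derive; auto.
Qed.

Lemma gompertz_antitone (x b1 b2 s : R) : 0 <= x -> b1 <= b2 ->
  gompertz x b2 s <= gompertz x b1 s.
Proof.
  intros Hx Hb. unfold gompertz.
  destruct (Rle_lt_or_eq_dec _ _ (Rmult_le_compat_l x (b1 - s) (b2 - s) Hx ltac:(lra))) as [H | ->].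
  - left. apply exp_increasing, Ropp_lt_contravar, exp_increasing, H.
  - lra.
Qed.

Lemma gompertz_le_left (x b s eta : R) : 0 <= x -> 0 <= eta -> s + eta <= b ->
  gompertz x b s <= / (1 + x * eta).
Proof.
  intros Hx Heta Hs. unfold gompertz.
  assert (Hy : 1 + x * eta <= exp (x * (b - s)))
    by (eapply Rle_trans; [| apply exp_ineq1_le]; nra).
  eapply Rle_trans; [apply exp_neg_le_inv; left; apply exp_pos |].
  apply Rinv_le_contravar; nra.
Qed.

Lemma gompertz_ge_right (x b s eta : R) : 0 <= x -> 0 <= eta -> b + eta <= s ->
  1 - / (1 + x * eta) <= gompertz x b s.
Proof.
  intros Hx Heta Hs. unfold gompertz.
  assert (Hy : exp (x * (b - s)) <= / (1 + x * eta)).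
  { replace (x * (b - s)) with (- (x * (s - b))) by ring.
    eapply Rle_trans; [apply exp_neg_le_inv; nra | apply Rinv_le_contravar; nra]. }
  pose proof (exp_ineq1_le (- exp (x * (b - s)))). lra.
Qed.

Lemma gompertz_window_nonneg (x b1 b2 s : R) : 0 <= x -> b1 <= b2 ->
  0 <= gompertz_window x b1 b2 s.
Proof.
  intros Hx Hb. pose proof (gompertz_antitone x b1 b2 s Hx Hb). unfold gompertz_window. lra.
Qed.

Lemma gompertz_window_le_left (x b1 b2 s eta : R) : 0 <= x -> 0 <= eta -> s + eta <= b1 ->
  gompertz_window x b1 b2 s <= / (1 + x * eta).
Proof.
  intros Hx Heta Hs. pose proof (gompertz_le_left x b1 s eta Hx Heta Hs).
  assert (0 < gompertz x b2 s) by apply exp_pos.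
  unfold gompertz_window. lra.
Qed.

Lemma gompertz_window_ge_mid (x b1 b2 s eta : R) : 0 <= x -> 0 <= eta ->
  b1 + eta <= s -> s + eta <= b2 -> 1 - 2 / (1 + x * eta) <= gompertz_window x b1 b2 s.
Proof.
  intros Hx Heta Hs1 Hs2.
  pose proof (gompertz_ge_right x b1 s eta Hx Heta Hs1).
  pose proof (gompertz_le_left x b2 s eta Hx Heta Hs2).
  unfold gompertz_window, Rdiv. lra.
Qed.

Lemma gompertz_taylor_error (N : nat) (x b B s : R) : 0 < x -> 0 <= s -> b <= B ->
  Rabs (gompertz x b s - gompertz_taylor N x b s) <= exp (x * B) ^ S N / INR (fact (S N)).
Proof.
  intros Hx Hs Hb. eapply Rle_trans; [apply exp_taylor_error_neg, exp_pos |].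
  apply Rmult_le_compat_r; [left; apply Rinv_0_lt_compat, INR_fact_lt_0 |].
  apply pow_incr. split; [left; apply exp_pos |].
  destruct (Req_dec (x * (b - s)) (x * B)) as [-> | Hne]; [lra |].
  left. apply exp_increasing. nra.
Qed.

Lemma gompertz_taylor_expand (N : nat) (x b u s : R) :
  gompertz_taylor N x b s =
  sum_f_R0 (fun m => (-1) ^ m / INR (fact m) * exp (INR m * x * (b - u))
                     * exp ((u - s) * (INR m * x))) N.
Proof.
  apply sum_eq. intros m _.
  replace (- exp (x * (b - s))) with (-1 * exp (x * (b - s))) by ring.
  rewrite Rpow_mult_distr, exp_pow_INR, Rmult_assoc, <- exp_plus.
  replace (INR m * x * (b - u) + (u - s) * (INR m * x)) with (INR m * (x * (b - s))) by ring.
  unfold Rdiv. ring.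
Qed.

Lemma RInt_gompertz_taylor (F : R -> R) (N : nat) (x b u : R) :
  (forall s, continuous F s) ->
  ex_RInt (fun s => F s * gompertz_taylor N x b s) 0 u /\
  RInt (fun s => F s * gompertz_taylor N x b s) 0 u =
  sum_f_R0 (fun m => (-1) ^ m / INR (fact m) * exp (INR m * x * (b - u))
                     * Phi F u (INR m * x)) N.
Proof.
  intros HF.
  set (c m := (-1) ^ m / INR (fact m) * exp (INR m * x * (b - u))).
  set (g m s := scal (c m) (F s * exp ((u - s) * (INR m * x)))).
  assert (Hg : forall m, ex_RInt (g m) 0 u).
  { intros m. apply (ex_RInt_scal (V := R_NormedModule)).
    apply ex_RInt_continuous_everywhere, continuous_Phi_integrand, HF. }
  assert (Hpt : forall s, F s * gompertz_taylor N x b s = sum_f_R0 (fun m => g m s) N).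
  { intros s. rewrite (gompertz_taylor_expand N x b u s), scal_sum.
    apply sum_eq. intros m _. unfold g, c. change (scal ?k ?v) with (k * v). ring. }
  split.
  - eapply (ex_RInt_ext (V := R_NormedModule)); [intros s _; symmetry; apply Hpt |].
    apply ex_RInt_sum_f_R0, Hg.
  - rewrite (RInt_ext _ _ _ _ (fun s _ => Hpt s)), RInt_sum_f_R0 by exact Hg.
    apply sum_eq. intros m _. unfold g.
    rewrite (RInt_scal (V := R_CompleteNormedModule))
      by apply ex_RInt_continuous_everywhere, continuous_Phi_integrand, HF.
    reflexivity.
Qed.

Lemma RInt_gompertz_window_taylor_error (F : R -> R) (N : nat) (u M x b1 b2 : R) :
  (forall s, continuous F s) -> 0 <= u -> (forall s, 0 <= s <= u -> Rabs (F s) <= M) ->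
  b1 <= b2 -> 0 < x ->
  Rabs (RInt (fun s => F s * gompertz_window x b1 b2 s) 0 u
        - (RInt (fun s => F s * gompertz_taylor N x b1 s) 0 u
           - RInt (fun s => F s * gompertz_taylor N x b2 s) 0 u))
  <= u * (M * (2 * (exp (x * b2) ^ S N / INR (fact (S N))))).
Proof.
  intros HF Hu HM Hb Hx.
  assert (HI : ex_RInt (fun s => F s * gompertz_window x b1 b2 s) 0 u).
  { apply ex_RInt_continuous_everywhere. intros s.
    apply (continuous_mult F); [apply HF | apply continuous_gompertz_window]. }
  assert (HT : forall b, ex_RInt (fun s => F s * gompertz_taylor N x b s) 0 u)
    by (intros b; apply (RInt_gompertz_taylor F N x b u HF)).
  pose proof (is_RInt_minus _ _ 0 u _ _ (RInt_correct _ _ _ HI)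
                (is_RInt_minus _ _ 0 u _ _ (RInt_correct _ _ _ (HT b1))
                                           (RInt_correct _ _ _ (HT b2)))) as Hdiff.
  repeat change (minus ?a ?b) with (a - b) in Hdiff. cbv beta in Hdiff.
  rewrite <- (is_RInt_unique _ _ _ _ Hdiff).
  apply Rle_trans with ((u - 0) * (M * (2 * (exp (x * b2) ^ S N / INR (fact (S N))))));
    [| right; ring].
  apply abs_RInt_le_const; [lra | eexists; exact Hdiff |].
  intros s Hs.
  replace (_ - _) with (F s * ((gompertz x b1 s - gompertz_taylor N x b1 s)
                              - (gompertz x b2 s - gompertz_taylor N x b2 s)))
    by (unfold gompertz_window; ring).
  rewrite Rabs_mult. apply Rmult_le_compat; [apply Rabs_pos | apply Rabs_pos | apply HM; lra |].
  eapply Rle_trans; [apply Rabs_triang |]. rewrite Rabs_Ropp.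
  pose proof (gompertz_taylor_error N x b1 b2 s Hx ltac:(lra) Hb).
  pose proof (gompertz_taylor_error N x b2 b2 s Hx ltac:(lra) ltac:(lra)). lra.
Qed.

Section GrowthBound.

Variables (F : R -> R) (u rho d z0 : R).
Hypothesis HF : forall s, continuous F s.
Hypothesis Hrho : 0 <= rho.
Hypothesis Hgrowth : forall z, z0 <= z -> Rabs (Phi F u z) <= rho * exp (d * z).

Lemma gompertz_term_bound (x b1 b2 : R) (m : nat) :
  (1 <= m)%nat -> 0 < x -> z0 <= x -> b1 <= b2 ->
  Rabs ((-1) ^ m / INR (fact m) * exp (INR m * x * (b1 - u)) * Phi F u (INR m * x)
        - (-1) ^ m / INR (fact m) * exp (INR m * x * (b2 - u)) * Phi F u (INR m * x))
  <= rho * exp (- (x * (u - b2 - d))) ^ m.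
Proof.
  intros Hm Hx Hz Hb.
  assert (Hm1 : 1 <= INR m) by (apply (le_INR 1); lia).
  set (e1 := exp (INR m * x * (b1 - u))). set (e2 := exp (INR m * x * (b2 - u))).
  assert (He : 0 < e1 <= e2).
  { split; [apply exp_pos |]. unfold e1, e2.
    destruct (Req_dec b1 b2) as [-> | Hne]; [lra |].
    left. apply exp_increasing. assert (0 < INR m * x) by nra. nra. }
  assert (Hcoef : Rabs ((-1) ^ m / INR (fact m)) <= 1).
  { unfold Rdiv. rewrite Rabs_mult, pow_1_abs, Rabs_inv, Rmult_1_l.
    rewrite Rabs_pos_eq by (left; apply INR_fact_lt_0).
    rewrite <- Rinv_1. apply Rinv_le_contravar; [lra |].
    apply (le_INR 1), lt_O_fact. }
  assert (HPhi : Rabs (Phi F u (INR m * x)) <= rho * exp (d * (INR m * x))) by (apply Hgrowth; nra).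
  replace (_ - _) with ((-1) ^ m / INR (fact m) * (e1 - e2) * Phi F u (INR m * x)) by ring.
  rewrite exp_pow_INR.
  replace (rho * _) with (e2 * (rho * exp (d * (INR m * x)))).
  2: { unfold e2. rewrite <- Rmult_assoc, (Rmult_comm _ rho), Rmult_assoc, <- exp_plus.
       f_equal. f_equal. ring. }
  rewrite !Rabs_mult, (Rabs_left1 (e1 - e2)) by lra.
  assert (0 <= Rabs (Phi F u (INR m * x))) by apply Rabs_pos.
  assert (0 <= Rabs ((-1) ^ m / INR (fact m))) by apply Rabs_pos.
  apply Rmult_le_compat; [nra | lra | nra | exact HPhi].
Qed.

Lemma RInt_gompertz_taylor_diff_bound (N : nat) (x b1 b2 : R) :
  b1 <= b2 -> 0 < x -> z0 <= x -> b2 + d < u ->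
  Rabs (RInt (fun s => F s * gompertz_taylor N x b1 s) 0 u
        - RInt (fun s => F s * gompertz_taylor N x b2 s) 0 u)
  <= rho * exp (- (x * (u - b2 - d))) / (1 - exp (- (x * (u - b2 - d)))).
Proof.
  intros Hb Hx Hzx Hd.
  rewrite (proj2 (RInt_gompertz_taylor F N x b1 u HF)),
          (proj2 (RInt_gompertz_taylor F N x b2 u HF)), <- minus_sum.
  apply Rabs_sum_f_R0_le_geom; [| exact Hrho | |].
  - split; [left; apply exp_pos |]. rewrite <- exp_0. apply exp_increasing. nra.
  - simpl. rewrite !Rmult_0_l, exp_0. ring.
  - intros m Hm. apply gompertz_term_bound; assumption.
Qed.

(* Let the truncation order N go to infinity: the Taylor error vanishes,
   while the bound on the truncated integrals does not depend on N. *)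
Lemma Rabs_RInt_gompertz_window_le (M b1 b2 x : R) :
  0 <= u -> (forall s, 0 <= s <= u -> Rabs (F s) <= M) ->
  b1 <= b2 -> 0 < x -> z0 <= x -> b2 + d < u ->
  Rabs (RInt (fun s => F s * gompertz_window x b1 b2 s) 0 u)
  <= rho * exp (- (x * (u - b2 - d))) / (1 - exp (- (x * (u - b2 - d)))).
Proof.
  intros Hu HM Hb Hx Hzx Hd.
  assert (HM0 : 0 <= M) by (eapply Rle_trans; [apply Rabs_pos | apply (HM 0); lra]).
  set (Y := exp (x * b2)).
  apply Rle_plus_epsilon. intros eps Heps.
  assert (Heta : 0 < eps / (2 * u * M + 1)) by (apply Rdiv_lt_0_compat; nra).
  destruct (cv_speed_pow_fact Y _ Heta) as [N HN].
  specialize (HN (S N) ltac:(lia)). unfold R_dist in HN. rewrite Rminus_0_r in HN.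
  pose proof (Rle_lt_trans _ _ _ (Rle_abs _) HN) as Hsmall.
  assert (Hfact : 0 <= Y ^ S N / INR (fact (S N)))
    by (apply Rdiv_le_0_compat; [apply pow_le; left; apply exp_pos | apply INR_fact_lt_0]).
  assert (Herr : u * (M * (2 * (Y ^ S N / INR (fact (S N))))) <= eps).
  { assert (Hscale : (2 * u * M + 1) * (eps / (2 * u * M + 1)) = eps) by (field; nra). nra. }
  pose proof (RInt_gompertz_window_taylor_error F N u M x b1 b2 HF Hu HM Hb Hx).
  pose proof (RInt_gompertz_taylor_diff_bound N x b1 b2 Hb Hx Hzx Hd).
  set (T1 := RInt (fun s => F s * gompertz_taylor N x b1 s) 0 u) in *.
  set (T2 := RInt (fun s => F s * gompertz_taylor N x b2 s) 0 u) in *.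
  pose proof (Rabs_triang_inv (RInt (fun s => F s * gompertz_window x b1 b2 s) 0 u) (T1 - T2)).
  unfold Y in *. lra.
Qed.

End GrowthBound.

Lemma RInt_gompertz_window_ge (F : R -> R) (u c δ M x : R) :
  (forall s, continuous F s) -> 0 < δ <= u -> 0 <= c ->
  (forall s, u - δ <= s <= u -> c <= F s) ->
  (forall s, 0 <= s <= u -> Rabs (F s) <= M) -> 48 <= x * δ ->
  c * δ / 16 - 2 * u * M / (x * δ)
  <= RInt (fun s => F s * gompertz_window x (u - δ / 2) (u - δ / 4) s) 0 u.
Proof.
  intros HF Hδ Hc HFc HM Hxδ.
  assert (Hx : 0 < x) by nra.
  assert (HM0 : 0 <= M) by (eapply Rle_trans; [apply Rabs_pos | apply (HM u); lra]).
  set (D := gompertz_window x (u - δ / 2) (u - δ / 4)).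
  assert (HD0 : forall s, 0 <= D s) by (intros s; apply gompertz_window_nonneg; lra).
  assert (HFD : forall s, continuous (fun t => F t * D t) s)
    by (intros s; apply (continuous_mult F); [apply HF | apply continuous_gompertz_window]).
  assert (Hex : forall a b, ex_RInt (fun t => F t * D t) a b)
    by (intros; apply ex_RInt_continuous_everywhere, HFD).
  rewrite <- (RInt_Chasles _ 0 (u - δ) u) by auto. change (plus ?r ?t) with (r + t).
  assert (Htail : Rabs (RInt (fun t => F t * D t) 0 (u - δ))
                  <= (u - δ - 0) * (M * (2 / (x * δ)))).
  { apply abs_RInt_le_const; [lra | auto |]. intros t Ht.
    assert (Hinv : / (1 + x * (δ / 2)) <= 2 / (x * δ)).
    { replace (2 / (x * δ)) with (/ (x * (δ / 2))) by (field; lra).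
      apply Rinv_le_contravar; nra. }
    pose proof (gompertz_window_le_left x (u - δ / 2) (u - δ / 4) t (δ / 2)
                  ltac:(lra) ltac:(lra) ltac:(lra)).
    rewrite Rabs_mult, (Rabs_pos_eq (D t)) by apply HD0.
    apply Rmult_le_compat; [apply Rabs_pos | apply HD0 | apply HM; lra | unfold D; lra]. }
  assert (Hmid : δ / 8 * (c / 2) <= RInt (fun t => F t * D t) (u - 7 * δ / 16) (u - 5 * δ / 16)).
  { assert (Hconst : δ / 8 * (c / 2) = RInt (fun _ => c / 2) (u - 7 * δ / 16) (u - 5 * δ / 16))
      by (rewrite RInt_const; change (scal ?k ?v) with (k * v); field).
    rewrite Hconst. apply RInt_le; [lra | apply ex_RInt_const | auto |]. intros t Ht.
    assert (2 / (1 + x * (δ / 16)) <= 1 / 2) by (apply Rle_div_l; lra).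
    pose proof (gompertz_window_ge_mid x (u - δ / 2) (u - δ / 4) t (δ / 16)
                  ltac:(lra) ltac:(lra) ltac:(lra) ltac:(lra)).
    pose proof (HFc t ltac:(lra)). unfold D. nra. }
  assert (Hhead : RInt (fun t => F t * D t) (u - 7 * δ / 16) (u - 5 * δ / 16)
                  <= RInt (fun t => F t * D t) (u - δ) u).
  { apply RInt_subinterval_le; [lra | lra | lra | exact HFD |].
    intros t Ht. pose proof (HFc t Ht). pose proof (HD0 t). nra. }
  assert ((u - δ - 0) * (M * (2 / (x * δ))) <= 2 * u * M / (x * δ)).
  { unfold Rdiv.
    assert (0 <= M * / (x * δ)) by (apply Rmult_le_pos; [lra | left; apply Rinv_0_lt_compat; lra]).
    nra. }
  pose proof (Rabs_maj2 (RInt (fun t => F t * D t) 0 (u - δ))).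
  lra.
Qed.

Lemma geom_ratio_exp_neg_le (rho y : R) : 0 <= rho -> 2 <= y ->
  rho * exp (- y) / (1 - exp (- y)) <= 2 * rho / y.
Proof.
  intros Hrho Hy.
  set (w := exp (- y)).
  assert (Hw0 : 0 < w) by apply exp_pos.
  assert (Hw : w <= / y).
  { eapply Rle_trans; [apply exp_neg_le_inv; lra | apply Rinv_le_contravar; lra]. }
  assert (Hy2 : / y <= / 2) by (apply Rinv_le_contravar; lra).
  assert (Hinv : / (1 - w) <= 2).
  { apply Rle_trans with (/ (1 / 2)); [apply Rinv_le_contravar; lra | right; field]. }
  unfold Rdiv. apply Rle_trans with (rho * w * 2).
  - apply Rmult_le_compat_l; [nra | exact Hinv].
  - nra.
Qed.

Lemma Phi_not_exp_bounded (F : R -> R) (u rho c δ : R) :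
  (forall s, continuous F s) -> 0 < δ <= u -> 0 < c -> 0 < rho ->
  (forall s, u - δ <= s <= u -> c <= F s) ->
  forall z0, exists z, z0 <= z /\ rho * exp (δ / 8 * z) < Rabs (Phi F u z).
Proof.
  intros HF Hδ Hc Hrho HFc z0. apply NNPP. intros Hnot.
  assert (Hgrowth : forall z, z0 <= z -> Rabs (Phi F u z) <= rho * exp (δ / 8 * z)).
  { intros z Hz. apply Rnot_lt_le. intros Hlt. apply Hnot. exists z. auto. }
  destruct (continuous_bounded_on F 0 u ltac:(lra) HF) as [M HM].
  assert (HM0 : 0 <= M) by (eapply Rle_trans; [apply Rabs_pos | apply (HM 0); lra]).
  set (x := Rmax z0 (Rmax (48 / δ) (16 * (2 * u * M + 16 * rho) / (c * δ ^ 2) + 1))).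
  assert (Hxz : z0 <= x) by apply Rmax_l.
  assert (Hxδ : 48 <= x * δ).
  { apply (Rmult_le_reg_r (/ δ)); [apply Rinv_0_lt_compat; lra |].
    rewrite Rmult_assoc, Rinv_r, Rmult_1_r by lra.
    eapply Rle_trans; [apply Rmax_l | apply Rmax_r]. }
  assert (HxK : 16 * (2 * u * M + 16 * rho) < c * δ ^ 2 * x).
  { assert (Hcδ : 0 < c * δ ^ 2) by (apply Rmult_lt_0_compat; [lra | apply pow_lt; lra]).
    assert (HK : 16 * (2 * u * M + 16 * rho) / (c * δ ^ 2) + 1 <= x)
      by (eapply Rle_trans; [apply Rmax_r | apply Rmax_r]).
    apply (Rmult_lt_reg_r (/ (c * δ ^ 2))); [apply Rinv_0_lt_compat, Hcδ |].
    replace (c * δ ^ 2 * x * / (c * δ ^ 2)) with x by (field; lra). unfold Rdiv in HK. lra. }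
  clearbody x.
  set (I := RInt (fun s => F s * gompertz_window x (u - δ / 2) (u - δ / 4) s) 0 u).
  assert (Hlower : c * δ / 16 - 2 * u * M / (x * δ) <= I)
    by (apply RInt_gompertz_window_ge; auto; lra).
  assert (Hupper : Rabs I <= 16 * rho / (x * δ)).
  { eapply Rle_trans;
      [apply (Rabs_RInt_gompertz_window_le F u rho (δ / 8) z0 HF ltac:(lra) Hgrowth M);
       auto; nra |].
    replace (x * (u - (u - δ / 4) - δ / 8)) with (x * δ / 8) by field.
    replace (16 * rho / (x * δ)) with (2 * rho / (x * δ / 8)) by (field; nra).
    apply geom_ratio_exp_neg_le; lra. }
  pose proof (Rle_abs I).
  assert (Hkey : c * δ / 16 * (x * δ) <= 2 * u * M + 16 * rho).
  { replace (2 * u * M + 16 * rho) with ((2 * u * M / (x * δ) + 16 * rho / (x * δ)) * (x * δ))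
      by (field; nra).
    apply Rmult_le_compat_r; lra. }
  nra.
Qed.

Theorem lemma4p5 (f : R -> R) (u rho : R)
  (Hf : continuous_on_01 f) (Hu : 0 < u <= 1) (Hrho : 0 < rho)
  (Hfu : f u <> 0) :
  exists d : R, 0 < d /\
    exists r : nat -> R, is_lim_seq r p_infty /\
      forall k : nat, Rabs (Phi f u (r k)) > rho * exp (d * r k).
Proof.
  (* Scaling by f u makes g u > 0 without a case split on the sign of f u. *)
  set (g s := f u * f (clamp01 s)).
  assert (Hfc : forall s, continuous (fun t => f (clamp01 t)) s)
    by apply continuous_on_01_clamp01, Hf.
  assert (Hg : forall s, continuous g s)
    by (intros s; apply (continuous_mult (fun _ => f u)); [apply continuous_const | apply Hfc]).
  assert (Hgu : 0 < g u) by (unfold g; rewrite clamp01_id by lra; nra).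
  assert (HPhi : forall z, Phi g u z = f u * Phi f u z).
  { intros z. unfold g. rewrite Phi_scal by exact Hfc.
    f_equal. apply Phi_ext; [lra |]. intros s Hs. rewrite clamp01_id by lra. reflexivity. }
  destruct (continuous_ge_half_left g u ltac:(lra) Hgu (Hg u)) as [δ [Hδ Hgδ]].
  assert (Hfu0 : 0 < Rabs (f u)) by (apply Rabs_pos_lt, Hfu).
  pose proof (Phi_not_exp_bounded g u (rho * Rabs (f u)) (g u / 2) δ Hg Hδ ltac:(lra)
                (Rmult_lt_0_compat _ _ Hrho Hfu0) Hgδ) as Hunbounded.
  exists (δ / 8). split; [lra |].
  apply (seq_to_infinity_of_unbounded (fun z => Rabs (Phi f u z) > rho * exp (δ / 8 * z))).
  intros z0. destruct (Hunbounded z0) as [z [Hz Hlt]]. exists z. split; [exact Hz |].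
  rewrite HPhi, Rabs_mult in Hlt.
  apply Rmult_lt_reg_l with (Rabs (f u)); [exact Hfu0 |]. lra.
Qed.
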